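(* Let $\hat H(w)=\frac1{1+w}$. Let $(\alpha,\beta)\in\mathbb{R}^2$ satisfy $\alpha<2$, $\beta>\alpha-1$, and one of: (a) $-8<\alpha<2$ and $-16-4\alpha<\beta<\alpha^2/4$; (b) $\alpha^2/4\le\beta\le 1$; (c) $1<\beta<16$, $\beta\ge\alpha^2/4$, and $\alpha<2\big(8-8\beta^{1/4}+\sqrt\beta\big)$. Then for every $\tilde\tau>0$, $\Phi(w)=0$ has no root on the imaginary axis and all its roots satisfy $\operatorname{Re} w<0$; i.e. the equilibrium is locally asymptotically stable for every mean delay. (This is the region bounded by the line $\beta=-4\alpha-16$, the curve $\alpha=2(8-8\beta^{1/4}+\sqrt\beta)$ and the line $\beta=\alpha-1$, and it contains the kernel-independent region $\{|\alpha|-1<\beta<1\}$.)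
   Context: For a delay-to-time-constant ratio $\tilde\tau>0$ and $\alpha,\beta\in\mathbb{R}$, the rescaled characteristic equation of the linearized coupled Wilson–Cowan system with kernel transform $\hat H$ is $$\Phi(w):=(w+\tilde\tau)^4-\alpha\,\tilde\tau^2(w+\tilde\tau)^2\hat H(w)^2+\beta\,\tilde\tau^4\hat H(w)^4=0.$$ For the weak Gamma kernel $h(t)=\tau^{-1}e^{-t/\tau}$ (mean $\tau$), $\hat H(w)=(1+w)^{-1}$. The equilibrium is locally asymptotically stable iff all roots of $\Phi$ have negative real part. *)

From Stdlib Require Import Reals.
From Coquelicot Require Import Coquelicot.
Open Scope R_scope.

Definition Hhat (w : C) : C := Cinv (RtoC 1 + w)%C.

Definition Phi (t alpha beta : R) (w : C) : C :=
  ((w + RtoC t) ^ 4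
   - RtoC alpha * RtoC t ^ 2 * (w + RtoC t) ^ 2 * Hhat w ^ 2
   + RtoC beta * RtoC t ^ 4 * Hhat w ^ 4)%C.

(* A root of Phi: a point of the domain of Phi (w <> -1, where H has its pole)
   at which Phi vanishes. *)
Definition is_root_Phi (t alpha beta : R) (w : C) : Prop :=
  w <> (- RtoC 1)%C /\ Phi t alpha beta w = RtoC 0.

Definition region (alpha beta : R) : Prop :=
  alpha < 2 /\ beta > alpha - 1 /\
  ( (-8 < alpha < 2 /\ -16 - 4 * alpha < beta < alpha ^ 2 / 4)
  \/ (alpha ^ 2 / 4 <= beta <= 1)
  \/ (1 < beta < 16 /\ beta >= alpha ^ 2 / 4 /\
      alpha < 2 * (8 - 8 * sqrt (sqrt beta) + sqrt beta)) ).

From Stdlib Require Import Reals Lra Psatz.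
From Coquelicot Require Import Coquelicot.
Open Scope R_scope.

(* Put v = 1 + w and u = (w + t) v.  Clearing the denominator v^4,
   Phi(w) = 0 becomes the biquadratic  u^4 - alpha t^2 u^2 + beta t^4 = 0,
   whose roots are u = t s with s^4 - alpha s^2 + beta = 0.
   (1) Every root s of  s^4 - alpha s^2 + beta  lies strictly inside the
       parabola  (Im s)^2 < 4 (1 - Re s)  when (alpha, beta) is in the region.
       Writing p = s^2, p is a root of p^2 - alpha p + beta: either p is real
       (s real or purely imaginary, handled by sign arguments) or p is a
       non-real conjugate pair, so alpha = 2 Re p and beta = |p|^2; the three
       cases of the region then place s inside the parabola.
   (2) Scaling by t, roots u satisfy (Im u)^2 < 4 t (t - Re u).
   (3) If Re w >= 0, then u = (w + t)(1 + w) lies outside that parabola.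
   Hence every root has Re w < 0, and in particular none is imaginary. *)

Definition inside_parabola (t : R) (u : C) : Prop :=
  Im u * Im u < 4 * t * (t - Re u).

Lemma region_bounds (alpha beta : R) : region alpha beta ->
  alpha < 2 /\ alpha - 1 < beta /\ -8 < alpha /\ 0 < 16 + 4 * alpha + beta.
Proof.
  intros [Ha [Hb Hcases]].
  destruct Hcases as [[Ha8 Hcase] | [Hcase | [Hbig [Hcase _]]]];
    repeat split; try lra; nra.
Qed.

(* A real root a of the biquadratic satisfies a < 1, because
   a^4 - alpha a^2 + beta = (a^2 - 1)(a^2 + 1 - alpha) + (1 - alpha + beta). *)
Lemma real_root_lt_1 (alpha beta a : R) :
  alpha < 2 -> alpha - 1 < beta ->
  a ^ 4 - alpha * a ^ 2 + beta = 0 -> a < 1.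
Proof.
  intros Ha Hb E.
  destruct (Rlt_or_le a 1) as [Hlt | Hge]; [exact Hlt | exfalso].
  assert (0 <= (a * a - 1) * (a * a + 1 - alpha)) by (apply Rmult_le_pos; nra).
  nra.
Qed.

(* A purely imaginary root b i satisfies b^2 < 4, because
   b^4 + alpha b^2 + beta = (b^2 - 4)(b^2 + 4 + alpha) + (16 + 4 alpha + beta). *)
Lemma imaginary_root_sq_lt_4 (alpha beta b : R) :
  -8 < alpha -> 0 < 16 + 4 * alpha + beta ->
  b ^ 4 + alpha * b ^ 2 + beta = 0 -> b * b < 4.
Proof.
  intros Ha Hb E.
  destruct (Rlt_or_le (b * b) 4) as [Hlt | Hge]; [exact Hlt | exfalso].
  assert (0 <= (b * b - 4) * (b * b + 4 + alpha)) by (apply Rmult_le_pos; lra).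
  nra.
Qed.

Lemma unit_disk_in_parabola (a b : R) :
  a * a + b * b <= 1 -> b <> 0 -> b * b < 4 * (1 - a).
Proof.
  intros Hdisk Hb.
  assert (0 < b * b) by exact (Rsqr_pos_lt _ Hb).
  assert (a < 1) by nra.
  nra.
Qed.

(* A point of modulus rho < 2 outside the parabola has real part at least
   2 - rho, hence Re(s^2) = a^2 - b^2 >= 8 - 8 rho + rho^2.  This is the
   curve alpha = 2 (8 - 8 beta^(1/4) + sqrt beta) bounding case (c). *)
Lemma outside_parabola_sq_re (a b rho : R) :
  0 <= rho -> rho * rho = a * a + b * b -> rho < 2 ->
  4 * (1 - a) <= b * b -> 8 - 8 * rho + rho * rho <= a * a - b * b.
Proof.
  intros Hrho Hmod Hlt Hout.
  assert ((a - 2) * (a - 2) <= rho * rho) by nra.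
  assert (2 - rho <= a) by nra.
  assert ((2 - rho) * (2 - rho) <= a * a) by nra.
  nra.
Qed.

(* Root s = a + b i with s^2 non-real: then s^2 and its conjugate are the two
   roots of p^2 - alpha p + beta, so alpha = 2 Re(s^2), beta = |s|^4. *)
Lemma nonreal_square_root_in_parabola (alpha beta a b : R) :
  region alpha beta -> a <> 0 -> b <> 0 ->
  alpha = 2 * (a * a - b * b) -> beta = (a * a + b * b) ^ 2 ->
  b * b < 4 * (1 - a).
Proof.
  intros [_ [_ Hcases]] Ha Hb Halpha Hbeta.
  assert (0 < a * a) by exact (Rsqr_pos_lt _ Ha).
  assert (0 < b * b) by exact (Rsqr_pos_lt _ Hb).
  destruct Hcases as [[_ [_ Hlow]] | [[_ Hle1] | [[_ Hlt16] [_ Hcurve]]]].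
  - (* case (a): beta < alpha^2/4 is impossible since |s|^4 >= (Re s^2)^2 *)
    exfalso. nra.
  - apply unit_disk_in_parabola; [nra | exact Hb].
  - set (rho := sqrt (a * a + b * b)).
    assert (Hrho : 0 <= rho) by apply sqrt_pos.
    assert (Hmod : rho * rho = a * a + b * b) by (apply sqrt_sqrt; nra).
    assert (Hsqrt : sqrt beta = rho * rho).
    { rewrite Hmod, Hbeta. apply sqrt_pow2. nra. }
    assert (Hs4 : sqrt (sqrt beta) = rho).
    { rewrite Hsqrt. apply sqrt_square. exact Hrho. }
    rewrite Hs4, Hsqrt in Hcurve.
    destruct (Rlt_or_le (b * b) (4 * (1 - a))) as [Hin | Hout]; [exact Hin|].
    exfalso.
    assert (Hsmall : rho < 2) by nra.
    pose proof (outside_parabola_sq_re a b rho Hrho Hmod Hsmall Hout).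
    lra.
Qed.

Lemma biquadratic_root_in_parabola (alpha beta : R) (s : C) :
  region alpha beta ->
  (s ^ 4 - RtoC alpha * s ^ 2 + RtoC beta)%C = RtoC 0 ->
  inside_parabola 1 s.
Proof.
  intros Hr E.
  destruct (region_bounds _ _ Hr) as [Ha2 [Hb1 [Ha8 H16]]].
  destruct s as [a b]. unfold inside_parabola; simpl.
  pose proof (f_equal fst E) as Ere. pose proof (f_equal snd E) as Eim.
  simpl in Ere, Eim.
  assert (Hre : (a * a - b * b) ^ 2 - (2 * a * b) ^ 2
                - alpha * (a * a - b * b) + beta = 0)
    by (rewrite <- Ere; ring).
  assert (Him : (2 * a * b) * (2 * (a * a - b * b) - alpha) = 0)
    by (rewrite <- Eim; ring).
  destruct (Req_dec a 0) as [Ha0 | Ha0]; [|destruct (Req_dec b 0) as [Hb0 | Hb0]].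
  - subst a.
    assert (b * b < 4) by (apply (imaginary_root_sq_lt_4 alpha beta); nra).
    lra.
  - subst b.
    assert (a < 1) by (apply (real_root_lt_1 alpha beta); nra).
    lra.
  - assert (Halpha : alpha = 2 * (a * a - b * b)).
    { destruct (Rmult_integral _ _ Him) as [H | H]; [|lra].
      exfalso. apply Rmult_integral in H as [H | H]; [|contradiction].
      apply Rmult_integral in H as [H | H]; [lra | contradiction]. }
    assert (Hbeta : beta = (a * a + b * b) ^ 2) by (subst alpha; nra).
    replace (4 * 1 * (1 - a)) with (4 * (1 - a)) by ring.
    apply (nonreal_square_root_in_parabola alpha beta); assumption.
Qed.
Lemma scaled_biquadratic_root_in_parabola (alpha beta t : R) (u : C) :
  region alpha beta -> 0 < t ->
  (u ^ 4 - RtoC alpha * RtoC t ^ 2 * u ^ 2 + RtoC beta * RtoC t ^ 4)%C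
    = RtoC 0 ->
  inside_parabola t u.
Proof.
  intros Hr Ht E.
  assert (Ht0 : RtoC t <> RtoC 0).
  { intro Et. apply (f_equal fst) in Et. simpl in Et. lra. }
  assert (Hs : ((u / RtoC t) ^ 4 - RtoC alpha * (u / RtoC t) ^ 2
                + RtoC beta)%C = RtoC 0).
  { replace ((u / RtoC t) ^ 4 - RtoC alpha * (u / RtoC t) ^ 2 + RtoC beta)%C
      with ((u ^ 4 - RtoC alpha * RtoC t ^ 2 * u ^ 2 + RtoC beta * RtoC t ^ 4)
            / RtoC t ^ 4)%C by (field; exact Ht0).
    rewrite E. field. exact Ht0. }
  pose proof (biquadratic_root_in_parabola alpha beta _ Hr Hs) as Hin.
  destruct u as [p q]. unfold inside_parabola in *.
  replace (Re ((p, q) / RtoC t)%C) with (p / t) in Hin by (simpl; field; lra).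
  replace (Im ((p, q) / RtoC t)%C) with (q / t) in Hin by (simpl; field; lra).
  simpl.
  replace (q * q) with (t * t * (q / t * (q / t))) by (field; lra).
  replace (4 * t * (t - p)) with (t * t * (4 * 1 * (1 - p / t))) by (field; lra).
  apply Rmult_lt_compat_l; [nra | exact Hin].
Qed.

Lemma Phi_cleared (t alpha beta : R) (w : C) :
  (RtoC 1 + w)%C <> RtoC 0 ->
  (Phi t alpha beta w * (RtoC 1 + w) ^ 4)%C =
  (((w + RtoC t) * (RtoC 1 + w)) ^ 4
   - RtoC alpha * RtoC t ^ 2 * ((w + RtoC t) * (RtoC 1 + w)) ^ 2
   + RtoC beta * RtoC t ^ 4)%C.
Proof.
  intros Hv. unfold Phi, Hhat. field. exact Hv.
Qed.

(* Step (3): the closed right half-plane is mapped by w |-> (w + t)(1 + w)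
   outside the parabola, since with u = A + B i one has
   B^2 - 4 t (t - A) = y^2 ((2x + 1 + t)^2 - 4t) + 4 t x (1 + x + t) >= 0. *)
Lemma right_half_plane_outside_parabola (t : R) (w : C) :
  0 < t -> 0 <= Re w ->
  ~ inside_parabola t ((w + RtoC t) * (RtoC 1 + w))%C.
Proof.
  intros Ht Hx. destruct w as [x y]. unfold inside_parabola. simpl in *.
  assert (Hdisc : 0 <= (2 * x + 1 + t) * (2 * x + 1 + t) - 4 * t).
  { replace ((2 * x + 1 + t) * (2 * x + 1 + t) - 4 * t)
      with (4 * (x * x) + 4 * (x * (1 + t)) + (t - 1) * (t - 1)) by ring.
    assert (0 <= (t - 1) * (t - 1)) by apply Rle_0_sqr.
    nra. }
  assert (0 <= y * y * ((2 * x + 1 + t) * (2 * x + 1 + t) - 4 * t))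
    by (apply Rmult_le_pos; nra).
  assert (0 <= t * (x * (1 + x + t))) by (apply Rmult_le_pos; nra).
  nra.
Qed.

Theorem mainTheorem10 (alpha beta : R) :
  region alpha beta ->
  forall t : R, 0 < t ->
    (forall y : R, ~ is_root_Phi t alpha beta (RtoC 0 + RtoC y * Ci)%C) /\
    (forall w : C, is_root_Phi t alpha beta w -> Re w < 0).
Proof.
  intros Hr t Ht.
  assert (Hleft : forall w : C, is_root_Phi t alpha beta w -> Re w < 0).
  { intros w [Hpole Hroot].
    assert (Hv : (RtoC 1 + w)%C <> RtoC 0).
    { intro E. apply Hpole.
      replace w with ((RtoC 1 + w) - RtoC 1)%C by ring. rewrite E. ring. }
    assert (Hu := Phi_cleared t alpha beta w Hv).
    rewrite Hroot, Cmult_0_l in Hu.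
    pose proof (scaled_biquadratic_root_in_parabola alpha beta t _ Hr Ht
                  (eq_sym Hu)) as Hin.
    destruct (Rlt_or_le (Re w) 0) as [Hneg | Hnonneg]; [exact Hneg |].
    exfalso. exact (right_half_plane_outside_parabola t w Ht Hnonneg Hin). }
  split; [|exact Hleft].
  intros y Hroot. apply Hleft in Hroot. simpl in Hroot. lra.
Qed.
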